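(* Let $T>0$ and let $\alpha:[0,T]\to(0,1)$ be a continuously differentiable, decreasing function, written $t\mapsto\alpha_t$. Consider the variance preserving SDE (VPSDE) on $\mathbb{R}^D$ with coefficients ${F}_t=\frac12\frac{d\log\alpha_t}{dt}I$, ${G}_t=\sqrt{-\frac{d\log\alpha_t}{dt}}\,I$, and set $L_t=\sqrt{1-\alpha_t}\,I$ (so $L_tL_t^T=\Sigma_t=(1-\alpha_t)I$). Let $\Psi(t,s)$ be the transition matrix associated with $F$, i.e. $\frac{\partial}{\partial t}\Psi(t,s)=F_t\Psi(t,s)$, $\Psi(s,s)=I$. Let $\epsilon_\theta:\mathbb{R}^D\times[0,T]\to\mathbb{R}^D$ be any function. Then for $0\le t-\Delta t< t\le T$ the exponential-integrator update $$\hat{x}_{t-\Delta t}=\Psi(t-\Delta t,t)\hat{x}_t+\Big[\int_t^{t-\Delta t}\tfrac12\Psi(t-\Delta t,\tau)G_\tau G_\tau^TL_\tau^{-T}\,d\tau\Big]\epsilon_\theta(\hat{x}_t,t)$$ equals $$\hat{x}_{t-\Delta t}=\sqrt{\frac{\alpha_{t-\Delta t}}{\alpha_t}}\,\hat{x}_t+\Big[\sqrt{1-\alpha_{t-\Delta t}}-\sqrt{\frac{\alpha_{t-\Delta t}}{\alpha_t}}\sqrt{1-\alpha_t}\Big]\epsilon_\theta(\hat{x}_t,t),$$ which is exactly the deterministic DDIM sampling update.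
   Context: This update is the exponential-integrator discretization of the probability flow ODE $\frac{d\hat x}{dt}=F_t\hat x+\frac12 G_tG_t^TL_t^{-T}\epsilon_\theta(\hat x,t)$, where $\epsilon_\theta$ is a (noise-prediction) network, obtained by freezing $\epsilon_\theta$ at its value at time $t$ over $[t-\Delta t,t]$. The deterministic DDIM update (Song, Meng, Ermon) is the displayed second formula. *)

From HB Require Import structures.
From mathcomp Require Import all_boot all_order all_algebra.
From mathcomp Require Import all_classical all_reals all_analysis.
Set Implicit Arguments. Unset Strict Implicit. Unset Printing Implicit Defensive.
Import Order.TTheory GRing.Theory Num.Theory.
Import numFieldNormedType.Exports.
Local Open Scope classical_set_scope.
Local Open Scope ring_scope.

Definition dlog {R : realType} (alpha : R -> R) (t : R) : R :=
  derive1 (fun s => ln (alpha s)) t.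

Definition vpF {R : realType} (D : nat) (alpha : R -> R) (t : R) : 'M[R]_D :=
  (2^-1 * dlog alpha t)%:M.
Definition vpG {R : realType} (D : nat) (alpha : R -> R) (t : R) : 'M[R]_D :=
  (Num.sqrt (- dlog alpha t))%:M.
Definition vpL {R : realType} (D : nat) (alpha : R -> R) (t : R) : 'M[R]_D :=
  (Num.sqrt (1 - alpha t))%:M.

Definition mx_integral {R : realType} (m n : nat) (a b : R)
  (M : R -> 'M[R]_(m, n)) : 'M[R]_(m, n) :=
  \matrix_(i, j)
    (if a <= b then Rintegral lebesgue_measure `[a, b] (fun tau => M tau i j)
     else - Rintegral lebesgue_measure `[b, a] (fun tau => M tau i j)).

From HB Require Import structures.
From mathcomp Require Import all_boot all_order all_algebra.
From mathcomp Require Import all_classical all_reals all_analysis.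
From mathcomp Require Import ring.
Set Implicit Arguments. Unset Strict Implicit. Unset Printing Implicit Defensive.
Import Order.TTheory GRing.Theory Num.Theory.
Import numFieldNormedType.Exports.
Local Open Scope classical_set_scope.
Local Open Scope ring_scope.

(* Since F_t is the scalar (d log alpha_t / dt) / 2, both u |-> Psi(u, s) and
   sqrt(alpha) solve the scalar linear ODE y' = F y, so their ratio is constant
   and Psi(u, s) = sqrt(alpha_u / alpha_s) I.  With G G^T = -(d log alpha / dt) I
   and L^-T = (1 - alpha)^(-1/2) I, the integrand is then sqrt(alpha_(t - dt))
   times the derivative of the noise-to-signal ratio sqrt((1 - alpha) / alpha),
   and the fundamental theorem of calculus evaluates the integral in closed
   form. *)

Section real_calculus.
Context {R : realType}.
Implicit Types (f g k F : R -> R) (a b : R).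

Lemma linear_ode_ratio_eq k f g a b :
  {within `[a, b], continuous f} -> {within `[a, b], continuous g} ->
  {in `[a, b], forall x, g x != 0} ->
  {in `]a, b[, forall x : R, is_derive x (1 : R) f (k x * f x)} ->
  {in `]a, b[, forall x : R, is_derive x (1 : R) g (k x * g x)} ->
  {in `[a, b] &, forall x y, f x / g x = f y / g y}.
Proof.
move=> cf cg g0 df dg.
have dq x : x \in `]a, b[ -> is_derive x (1 : R) (f * (fun y => (g y)^-1)) 0.
  move=> xab; have gx0 : g x != 0 by apply/g0/subset_itv_oo_cc.
  apply: is_derive_eq (is_deriveM (df x xab) (is_deriveV gx0 (dg x xab))) _.
  by rewrite /GRing.scale /=; field.
set q := f * (fun y => (g y)^-1) in dq *.
have cq : {within `[a, b], continuous q}.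
  have cinv : {within `[a, b], continuous (fun y => (g y)^-1)}.
    rewrite continuous_subspace_in => z /[!inE] zab.
    by apply: continuousV; [exact: g0 | exact: cg].
  by move=> x; apply: continuousM; [exact: cf | exact: cinv].
move=> x y xab yab; wlog xy : x y xab yab / x <= y.
  by move=> H; case: (leP x y) => [/H|/ltW/H/esym]; apply.
have dqxy : {in `]x, y[, forall z, is_derive z (1 : R) q 0}.
  move=> z zxy; apply/dq/(subitvP _ zxy).
  by rewrite subitvE !bnd_simp (itvP xab) (itvP yab).
have cqxy : {within `[x, y], continuous q}.
  apply: continuous_subspaceW cq => z /= zxy; apply: (subitvP _ zxy).
  by rewrite subitvE !bnd_simp (itvP xab) (itvP yab).
have [c _] := MVT_segment xy dqxy cqxy.
by rewrite mul0r => /eqP; rewrite subr_eq0 => /eqP.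
Qed.

Lemma is_derive_mx_entry m n (M : R -> 'M[R]_(m, n)) (dM : 'M[R]_(m, n)) x v i j :
  is_derive x v M dM -> is_derive x v (fun y => M y i j) (dM i j).
Proof.
case=> dM_ex <-; apply: DeriveDef; first by move/derivable_mxP: dM_ex; apply.
by rewrite derive_mx // mxE.
Qed.

Lemma Rintegral_is_derive F f a b : a < b ->
  {within `[a, b], continuous f} ->
  {in `[a, b], forall x, is_derive x (1 : R) F (f x)} ->
  Rintegral lebesgue_measure `[a, b] f = F b - F a.
Proof.
move=> ab cf dF.
have cF x : x \in `[a, b] -> {for x, continuous F}.
  by move=> /dF[dFx _]; apply/differentiable_continuous/derivable1_diffP.
have aab : a \in `[a, b] by rewrite in_itv /= lexx ltW.
have bab : b \in `[a, b] by rewrite in_itv /= lexx ltW.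
have dFoo : derivable_oo_LRcontinuous F a b.
  split.
  - by move=> x /subset_itv_oo_cc /dF[].
  - exact/cvg_at_right_filter/cF.
  - exact/cvg_at_left_filter/cF.
have F'f : {in `]a, b[, derive1 F =1 f}.
  by move=> x /subset_itv_oo_cc /dF[_ dFx]; rewrite derive1E dFx.
by rewrite /Rintegral (continuous_FTC2 ab cf dFoo F'f) -EFinB.
Qed.

Lemma decr_derive1_le0_itvcc f a b : a < b ->
  {in `[a, b], forall x, derivable f x (1 : R)} ->
  {within `[a, b], continuous (derive1 f)} ->
  {in `[a, b] &, forall x y, x < y -> f y < f x} ->
  {in `[a, b], forall x, derive1 f x <= 0}.
Proof.
move=> ab df cf' decrf.
have le0_oo x : x \in `]a, b[ -> derive1 f x <= 0.
  have decrf' : {in `[a, b] &, {homo f : x y /~ x < y}}.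
    by move=> y z yab zab; apply: decrf.
  apply: decr_derive1_le0_itv decrf'.
  by move=> y /[!inE] /subset_itv_oo_cc /df.
have [_ cf'a cf'b] := (continuous_within_itvP _ ab).1 cf'.
move=> x; rewrite in_itv /= => /andP[].
rewrite le_eqVlt => /predU1P[<- _|ax]; last rewrite le_eqVlt => /predU1P[->|xb].
- apply: (cvgr_to_le cf'a); near=> y.
  apply: le0_oo; rewrite in_itv /=; apply/andP; split; near: y.
    exact: nbhs_right_gt.
  exact: nbhs_right_lt.
- apply: (cvgr_to_le cf'b); near=> y.
  apply: le0_oo; rewrite in_itv /=; apply/andP; split; near: y.
    exact: nbhs_left_gt.
  exact: nbhs_left_lt.
- by apply: le0_oo; rewrite in_itv /= ax xb.
Unshelve. all: by end_near.
Qed.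

End real_calculus.

Lemma mx_integral_scalar_mx_gt {R : realType} n a b (M : R -> 'M[R]_n) (f : R -> R) :
  b < a -> {in `[b, a], forall tau, M tau = (f tau)%:M} ->
  mx_integral a b M = (- Rintegral lebesgue_measure `[b, a] f)%:M.
Proof.
move=> ba Mf; apply/matrixP => i j; rewrite !mxE leNgt ba /=.
have [<-|nij] := eqVneq i j.
  rewrite mulr1n; congr (- _); apply: eq_Rintegral => tau /[!inE] /Mf ->.
  by rewrite mxE eqxx mulr1n.
rewrite mulr0n (@eq_Rintegral _ _ _ _ _ (fun=> 0)) ?Rintegral_cst ?mul0r ?oppr0 //.
by move=> tau /[!inE] /Mf ->; rewrite mxE (negbTE nij).
Qed.

Definition noise_ratio {R : realType} (alpha : R -> R) t :=
  Num.sqrt (1 - alpha t) / Num.sqrt (alpha t).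

Definition dnoise_ratio {R : realType} (alpha : R -> R) t :=
  - derive1 alpha t / (2 * alpha t * Num.sqrt (alpha t) * Num.sqrt (1 - alpha t)).

Section vp_sde.
Context {R : realType} {T : R} {alpha : R -> R}.
Hypothesis alpha01 : forall t, t \in `[0, T] -> 0 < alpha t < 1.
Hypothesis alpha_derivable : forall t, t \in `[0, T] -> derivable alpha t 1.

Lemma dlog_alphaE t : t \in `[0, T] -> dlog alpha t = derive1 alpha t / alpha t.
Proof.
move=> /[dup] /alpha01 /andP[a0 _] tT.
have [_ dlnE] := is_derive1_comp (is_derive1_ln a0) (derivableP (alpha_derivable tT)).
by rewrite /dlog -[fun s => _]/(@ln R \o alpha) derive1E dlnE derive1E mulrC.
Qed.

Lemma is_derive_sqrt_alpha t : t \in `[0, T] ->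
  is_derive t (1 : R) (Num.sqrt \o alpha) (2^-1 * dlog alpha t * Num.sqrt (alpha t)).
Proof.
move=> /[dup] /alpha01 /andP[a0 _] tT.
apply: is_derive_eq (is_derive1_comp (is_derive1_sqrt a0) (derivableP (alpha_derivable tT))) _.
rewrite dlog_alphaE // -derive1E -{2}[alpha t](@sqr_sqrtr _ (alpha t)) ?ltW //.
by field; rewrite gt_eqF ?sqrtr_gt0.
Qed.

Lemma vp_transitionE D (Psi : R -> R -> 'M[R]_D) :
  (forall s, s \in `[0, T] -> Psi s s = 1%:M) ->
  (forall s, s \in `[0, T] -> {within `[0, T], continuous (fun u => Psi u s)}) ->
  (forall s t, s \in `[0, T] -> t \in `]0, T[ ->
     is_derive t 1 (fun u => Psi u s) (vpF D alpha t *m Psi t s)) ->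
  {in `[0, T] &, forall u s,
    Psi u s = (Num.sqrt (alpha u) / Num.sqrt (alpha s))%:M}.
Proof.
move=> Psi1 cPsi dPsi u s uT sT; apply/matrixP => i j.
have cPsi_ij : {within `[0, T], continuous (fun v => Psi v s i j)}.
  by move=> v; exact: continuous_comp (cPsi s sT v) (@coord_continuous _ _ _ i j _).
have csqrt : {within `[0, T], continuous (Num.sqrt \o alpha)}.
  by apply: derivable_within_continuous => t /is_derive_sqrt_alpha[].
have sqrt0 : {in `[0, T], forall t, Num.sqrt (alpha t) != 0}.
  by move=> t /alpha01 /andP[a0 _]; rewrite gt_eqF ?sqrtr_gt0.
have dPsi_ij t : t \in `]0, T[ ->
    is_derive t (1 : R) (fun v => Psi v s i j) (2^-1 * dlog alpha t * Psi t s i j).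
  move=> tT; apply: is_derive_eq (is_derive_mx_entry i j (dPsi s t sT tT)) _.
  by rewrite /vpF mul_scalar_mx mxE.
have dsqrt t : t \in `]0, T[ ->
    is_derive t (1 : R) (Num.sqrt \o alpha) (2^-1 * dlog alpha t * Num.sqrt (alpha t)).
  by move/subset_itv_oo_cc; exact: is_derive_sqrt_alpha.
have := linear_ode_ratio_eq cPsi_ij csqrt sqrt0 dPsi_ij dsqrt uT sT.
rewrite Psi1 // !mxE => /(congr1 ( *%R^~ (Num.sqrt (alpha u)))).
rewrite divfK ?sqrt0 // => ->.
by case: (i == j); rewrite ?mulr1n ?mulr0n ?mul0r // mul1r mulrC.
Qed.

Lemma is_derive_noise_ratio t : t \in `[0, T] ->
  is_derive t (1 : R) (noise_ratio alpha) (dnoise_ratio alpha t).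
Proof.
move=> /[dup] /alpha01 /andP[a0 a1] tT.
have b0 : 0 < 1 - alpha t by rewrite subr_gt0.
have dalpha := derivableP (alpha_derivable tT).
have dnum := @is_derive1_comp _ Num.sqrt (cst 1 - alpha) _ _ _
  (is_derive1_sqrt b0) (is_deriveB (is_derive_cst (1 : R) t 1) dalpha).
have r0 : Num.sqrt (alpha t) != 0 by rewrite gt_eqF ?sqrtr_gt0.
have dden := @is_deriveV _ (Num.sqrt \o alpha) _ _ _ r0
  (is_derive1_comp (is_derive1_sqrt a0) dalpha).
apply: is_derive_eq (is_deriveM dnum dden) _.
rewrite /dnoise_ratio -derive1E /=.
set r := Num.sqrt (alpha t) in r0 *; set s := Num.sqrt (1 - alpha t).
have s0 : s != 0 by rewrite gt_eqF ?sqrtr_gt0.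
have r2 : alpha t = r ^+ 2 by rewrite sqr_sqrtr ?ltW.
have s2 : 1 - alpha t = s ^+ 2 by rewrite sqr_sqrtr ?ltW.
have rs1 : 1 = r ^+ 2 + s ^+ 2 by rewrite -r2 -s2 addrC subrK.
rewrite -[RHS]mulr1 [X in _ = _ * X]rs1 r2 /GRing.scale /=.
by field; rewrite r0 s0.
Qed.

Lemma dnoise_ratio_continuous : {within `[0, T], continuous (derive1 alpha)} ->
  {within `[0, T], continuous (dnoise_ratio alpha)}.
Proof.
move=> cdalpha.
have calpha : {in `[0, T], continuous alpha}.
  move=> t tT; apply/differentiable_continuous/derivable1_diffP.
  exact: alpha_derivable.
have cden : {within `[0, T], continuous (fun t =>
    (2 * alpha t * Num.sqrt (alpha t) * Num.sqrt (1 - alpha t))^-1)}.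
  apply: continuous_in_subspaceT => t /[!inE] /[dup] /alpha01 /andP[a0 a1] tT.
  have ca := calpha t tT.
  have csa := continuous_comp ca (@sqrt_continuous R (alpha t)).
  have c1a : {for t, continuous (fun x => 1 - alpha x)}.
    by apply: continuousB; [exact: cvg_cst | exact: ca].
  have cs1a := continuous_comp c1a (@sqrt_continuous R (1 - alpha t)).
  have c2a : {for t, continuous (fun x => 2 * alpha x)}.
    by apply: continuousM; [exact: cvg_cst | exact: ca].
  apply: cvgV (continuousM (continuousM c2a csa) cs1a).
  by rewrite !mulf_neq0 ?gt_eqF ?sqrtr_gt0 ?subr_gt0.
have cnum : {within `[0, T], continuous (fun t => - derive1 alpha t)}.
  by move=> t; apply: continuousN; exact: cdalpha.
by move=> t; exact: continuousM (cnum t) (cden t).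
Qed.

Lemma Rintegral_dnoise_ratio c a b : 0 <= a -> a < b -> b <= T ->
  {within `[0, T], continuous (derive1 alpha)} ->
  Rintegral lebesgue_measure `[a, b] (fun tau => c * dnoise_ratio alpha tau)
  = c * (noise_ratio alpha b - noise_ratio alpha a).
Proof.
move=> a0 ab bT cdalpha.
have sub : `[a, b] `<=` `[0, T].
  by move=> x /= xab; apply: (subitvP _ xab); rewrite subitvE !bnd_simp a0 bT.
have cd : {within `[a, b], continuous (dnoise_ratio alpha)}.
  exact: continuous_subspaceW sub (dnoise_ratio_continuous cdalpha).
rewrite mulrBr.
apply: (@Rintegral_is_derive _ (fun tau => c * noise_ratio alpha tau)) => // [x|x /sub xT].
  by apply: continuousM; [exact: cvg_cst | exact: cd].
exact: is_derive_eq (is_deriveZ c (is_derive_noise_ratio xT)) _.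
Qed.

(* [Num.sqrt] sends negative numbers to 0, so G G^T = -(d log alpha / dt) I
   only where alpha is nonincreasing. *)
Lemma vp_integrandE D a tau : tau \in `[0, T] -> derive1 alpha tau <= 0 ->
  2^-1 *: ((Num.sqrt (alpha a) / Num.sqrt (alpha tau))%:M *m vpG D alpha tau
           *m (vpG D alpha tau)^T *m invmx ((vpL D alpha tau)^T))
  = (Num.sqrt (alpha a) * dnoise_ratio alpha tau)%:M.
Proof.
move=> /[dup] /alpha01 /andP[a0 a1] tT dalpha_le0.
rewrite /vpG /vpL !tr_scalar_mx invmx_scalar -!scalar_mxM scale_scalar_mx.
congr (_%:M); rewrite -[X in X / _]mulrA -expr2 sqr_sqrtr; last first.
  by rewrite dlog_alphaE // oppr_ge0 mulr_le0_ge0 // invr_ge0 ltW.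
rewrite dlog_alphaE // /dnoise_ratio.
set r := Num.sqrt (alpha tau).
have r0 : r != 0 by rewrite gt_eqF ?sqrtr_gt0.
have s0 : Num.sqrt (1 - alpha tau) != 0 by rewrite gt_eqF ?sqrtr_gt0 ?subr_gt0.
by field; rewrite r0 s0 /= gt_eqF.
Qed.

End vp_sde.

Theorem proposition2 (R : realType) (D : nat) (T : R) (alpha : R -> R)
  (Psi : R -> R -> 'M[R]_D) (eps_theta : 'cV[R]_D -> R -> 'cV[R]_D) :
  0 < T ->
  (* alpha : [0,T] -> (0,1), continuously differentiable, decreasing *)
  (forall t, t \in `[0, T] -> 0 < alpha t < 1) ->
  (forall t, t \in `[0, T] -> derivable alpha t 1) ->
  {within `[0, T], continuous (derive1 alpha)} ->
  {in `[0, T] &, forall x y, x < y -> alpha y < alpha x} ->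
  (* Psi is the transition matrix of F: d/dt Psi(t,s) = F_t Psi(t,s), Psi(s,s) = I *)
  (forall s, s \in `[0, T] -> Psi s s = 1%:M) ->
  (forall s, s \in `[0, T] -> {within `[0, T], continuous (fun u => Psi u s)}) ->
  (forall s t, s \in `[0, T] -> t \in `]0, T[ ->
     is_derive t 1 (fun u => Psi u s) (vpF D alpha t *m Psi t s)) ->
  forall (t dt : R) (x : 'cV[R]_D), 0 <= t - dt -> t - dt < t -> t <= T ->
    Psi (t - dt) t *m x
    + mx_integral t (t - dt)
        (fun tau => 2^-1 *: (Psi (t - dt) tau *m vpG D alpha tau
                              *m (vpG D alpha tau)^T
                              *m invmx ((vpL D alpha tau)^T)))
      *m eps_theta x t
    = Num.sqrt (alpha (t - dt) / alpha t) *: x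
      + (Num.sqrt (1 - alpha (t - dt))
         - Num.sqrt (alpha (t - dt) / alpha t) * Num.sqrt (1 - alpha t))
        *: eps_theta x t.
Proof.
move=> T0 alpha01 dalpha cdalpha decr Psi1 cPsi dPsi t dt x a0 ta tT.
set a := t - dt in a0 ta *.
have aT : a \in `[0, T] by rewrite in_itv /= a0 (le_trans (ltW ta) tT).
have tT' : t \in `[0, T] by rewrite in_itv /= tT (le_trans a0 (ltW ta)).
have sub : {subset `[a, t] <= `[0, T]}.
  by move=> y; apply: subitvP; rewrite subitvE !bnd_simp a0 tT.
have PsiE := vp_transitionE alpha01 dalpha Psi1 cPsi dPsi.
rewrite (mx_integral_scalar_mx_gt
  (f := fun tau => Num.sqrt (alpha a) * dnoise_ratio alpha tau) ta); last first.
  move=> tau /sub tauT; rewrite PsiE // (vp_integrandE alpha01 dalpha) //.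
  exact: (decr_derive1_le0_itvcc T0 dalpha cdalpha decr).
rewrite (Rintegral_dnoise_ratio alpha01 dalpha) // PsiE // !mul_scalar_mx /noise_ratio.
have /andP[alpha_a0 _] := alpha01 a aT.
have /andP[alpha_t0 _] := alpha01 t tT'.
rewrite sqrtrM ?sqrtrV ?ltW //; congr (_ *: _ + _ *: _).
by field; rewrite !gt_eqF ?sqrtr_gt0.
Qed.
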